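(* Let $m,n\in\mathbf{N}$ with $m\ge n$, and let $\mathcal{P}$ be a closed set family of shape $(m^n)$. Then every $X\in\mathcal{P}$ satisfies $X\supseteq\{1,2,\dots,m-n+1\}$.
   Context: Majorization: for $m$-subsets $X=\{x_1<\dots<x_m\}$, $Y=\{y_1<\dots<y_m\}$ of $\mathbf{N}=\{1,2,\dots\}$, $X\preceq Y$ if $x_i\le y_i$ for all $i$. A set family of shape $(m^n)$ is a collection of $n$ distinct $m$-subsets of $\mathbf{N}$; it is closed if whenever $Y$ belongs to it and $X\preceq Y$, then $X$ belongs to it. *)

From mathcomp Require Import all_boot all_order.
From mathcomp Require Import finmap.
Set Implicit Arguments. Unset Strict Implicit. Unset Printing Implicit Defensive.
Local Open Scope fset_scope.

Definition subsetN (X : {fset nat}) : bool := [forall x : X, 0 < val x].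

Definition msubset (m : nat) (X : {fset nat}) : bool := subsetN X && (#|` X| == m).

Definition incr_seq (X : {fset nat}) : seq nat := sort leq X.

Definition majorized (X Y : {fset nat}) : bool :=
  (#|` X| == #|` Y|) &&
  all (fun i => nth 0 (incr_seq X) i <= nth 0 (incr_seq Y) i) (iota 0 #|` X|).

Definition family_shape (m n : nat) (P : {fset {fset nat}}) : Prop :=
  #|` P| = n /\ forall X, X \in P -> msubset m X.

Definition closed_family (m : nat) (P : {fset {fset nat}}) : Prop :=
  forall X Y, Y \in P -> msubset m X -> majorized X Y -> X \in P.

From mathcomp Require Import all_boot all_order.
From mathcomp Require Import finmap zify.
Set Implicit Arguments. Unset Strict Implicit.
Local Open Scope fset_scope.

(* Suppose some X in P misses k <= m - n + 1. Its elements satisfy x_i >= i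
   below k and x_i >= i + 1 from k on, so X majorizes every set
   {1, ..., m + 1} \ {p} with k <= p <= m + 1. Closedness puts these
   m - k + 2 >= n + 1 distinct m-subsets into P, which has only n members. *)

Lemma incr_seq_sorted (X : {fset nat}) : sorted ltn (incr_seq X).
Proof.
rewrite ltn_sorted_uniq_leq sort_uniq fset_uniq /=.
exact: (sort_sorted leq_total).
Qed.

Lemma size_incr_seq (X : {fset nat}) : size (incr_seq X) = #|` X|.
Proof. exact: size_sort. Qed.

Lemma mem_incr_seq (X : {fset nat}) : incr_seq X =i X.
Proof. by move=> x; rewrite mem_sort. Qed.

Lemma sorted_ltn_nth_lb (s : seq nat) i :
  sorted ltn s -> i < size s -> nth 0 s 0 + i <= nth 0 s i.
Proof.
move=> s_sorted; elim: i => [|i IHi] lt_i; first by rewrite addn0.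
have step : nth 0 s i < nth 0 s i.+1.
  by apply: (sorted_ltn_nth ltn_trans) => //; rewrite inE // ltnW.
by have := IHi (ltnW lt_i); lia.
Qed.

Lemma subsetN_gt0 (X : {fset nat}) x : subsetN X -> x \in X -> 0 < x.
Proof. by move=> /forallP X_pos xX; apply: (X_pos [` xX]). Qed.

Section IncrSeqBounds.

Variables (m : nat) (X : {fset nat}).
Hypothesis X_msub : msubset m X.

Local Notation s := (incr_seq X).

Lemma size_incr_msubset : size s = m.
Proof. by case/andP: X_msub => _ /eqP <-; exact: size_incr_seq. Qed.

Lemma msubset_nth_lb i : i < m -> i.+1 <= nth 0 s i.
Proof.
move=> lt_im; have lt_is : i < size s by rewrite size_incr_msubset.
have s0_gt0 : 0 < nth 0 s 0.
  apply: (subsetN_gt0 (proj1 (andP X_msub))).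
  by rewrite -mem_incr_seq mem_nth // (leq_ltn_trans _ lt_is).
by have := sorted_ltn_nth_lb (incr_seq_sorted X) lt_is; lia.
Qed.

(* The tail of s from position k - 1 starts at a value >= k that is not k. *)
Lemma msubset_nth_lb_notin k i :
  0 < k -> k \notin X -> k.-1 <= i < m -> i.+2 <= nth 0 s i.
Proof.
move=> k_gt0 kX /andP[le_ki lt_im].
have sk_neq : nth 0 s k.-1 != k.
  apply: contraNneq kX => <-.
  by rewrite -mem_incr_seq mem_nth // size_incr_msubset (leq_ltn_trans le_ki).
have sk_ge := msubset_nth_lb (leq_ltn_trans le_ki lt_im).
have := @sorted_ltn_nth_lb (drop k.-1 s) (i - k.-1).
rewrite drop_sorted ?incr_seq_sorted // size_drop !nth_drop.
rewrite size_incr_msubset addn0 subnKC //; lia.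
Qed.

End IncrSeqBounds.

(* gap_set p m = {1, ..., m + 1} \ {p + 1}, listed increasingly by gap_seq. *)
Definition gap_seq (p m : nat) : seq nat := mkseq (fun i => (bump p i).+1) m.
Definition gap_set (p m : nat) : {fset nat} := [fset x in gap_seq p m].

Lemma gap_seq_sorted p m : sorted ltn (gap_seq p m).
Proof.
apply: (homo_sorted (e := ltn)); last exact: iota_ltn_sorted.
by move=> i j lt_ij /=; rewrite ltnS ltnNge leq_bump2 -ltnNge.
Qed.

Lemma incr_gap_set p m : incr_seq (gap_set p m) = gap_seq p m.
Proof.
apply: (irr_sorted_eq ltn_trans ltnn).
- exact: incr_seq_sorted.
- exact: gap_seq_sorted.
- by move=> x; rewrite mem_incr_seq inE.
Qed.

Lemma card_gap_set p m : #|` gap_set p m| = m.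
Proof. by rewrite -size_incr_seq incr_gap_set size_mkseq. Qed.

Lemma msubset_gap_set p m : msubset m (gap_set p m).
Proof.
rewrite /msubset card_gap_set eqxx andbT; apply/forallP => x.
by case: x => x /=; rewrite inE => /mapP[i _ ->].
Qed.

Lemma gap_set_inj m : {in [pred p | p <= m] &, injective (gap_set^~ m)}.
Proof.
move=> p q; rewrite !inE => le_pm le_qm eq_gap.
have eq_seq : gap_seq p m = gap_seq q m by rewrite -!incr_gap_set eq_gap.
wlog lt_pq : p q le_pm le_qm eq_seq {eq_gap} / p < q.
  move=> W; case: (ltngtP p q) => [lt_pq | lt_qp | //]; first exact: W.
  by apply/esym/W.
have := congr1 (nth 0 ^~ p) eq_seq.
rewrite !nth_mkseq ?(leq_trans lt_pq) // /bump; lia.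
Qed.

Lemma majorized_gap_set m (X : {fset nat}) k p :
  msubset m X -> 0 < k -> k \notin X -> k.-1 <= p ->
  majorized (gap_set p m) X.
Proof.
move=> X_msub k_gt0 kX le_kp.
have /andP[_ /eqP cardX] := X_msub.
rewrite /majorized card_gap_set cardX eqxx /=; apply/allP => i.
rewrite mem_iota add0n => /andP[_ lt_im].
rewrite incr_gap_set nth_mkseq // /bump; case: (leqP p i) => [le_pi | lt_ip].
- apply: (msubset_nth_lb_notin X_msub k_gt0 kX).
  by rewrite (leq_trans le_kp le_pi) lt_im.
- exact: (msubset_nth_lb X_msub).
Qed.

Theorem lemma5p4 (m n : nat) (P : {fset {fset nat}}) :
  n <= m -> family_shape m n P -> closed_family m P ->
  forall X, X \in P -> forall k, 1 <= k <= m - n + 1 -> k \in X.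
Proof.
move=> le_nm [cardP P_msub] P_closed X XP k /andP[k_gt0 le_k].
apply: contraT => kX.
pose gaps := [seq gap_set p m | p <- iota k.-1 (m + 2 - k)].
have gaps_uniq : uniq gaps.
  rewrite map_inj_in_uniq ?iota_uniq // => p q.
  rewrite !mem_iota => lt_p lt_q; apply: gap_set_inj; rewrite inE; lia.
have gaps_sub : {subset gaps <= P}.
  move=> Z /mapP[p]; rewrite mem_iota => /andP[le_kp _] ->.
  apply: (P_closed _ X XP (msubset_gap_set p m)).
  exact: majorized_gap_set (P_msub X XP) k_gt0 kX le_kp.
have := uniq_leq_size gaps_uniq gaps_sub.
rewrite size_map size_iota cardP; lia.
Qed.
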